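(* Consider a finite tabular MDP with a unique optimal policy $\pi^*$ and full reachability ($d_\rho^\pi(s)\ge d_{\min}>0$ for all states $s$ and all full-support policies $\pi$). For any temperature $\eta\in(0,\infty)$, the discrete DG update $\pi_{t+1}(a|s)=\pi_t(a|s)e^{\alpha w_t(s,a)U_t(s,a)}/Z^t_s$ with sufficiently small step size $\alpha>0$ satisfies $V(\pi_t)\to V^*$ and $\pi_t\to\pi^*$.
   Context: A finite MDP $(\mathcal S,\mathcal A,P,r,\gamma,\rho)$ with $r(s,a)\in[0,1]$, $\gamma\in[0,1)$; tabular softmax policies $\pi_\theta(a|s)=e^{\theta(s,a)}/\sum_{a'}e^{\theta(s,a')}$. $V^\pi,Q^\pi$ are discounted value functions, $V(\pi)=\mathbb{E}_{s\sim\rho}V^\pi(s)$, $V^*=V(\pi^* )$, $d_\rho^\pi(s)=(1-\gamma)\sum_{t\ge0}\gamma^t\Pr(s_t=s\mid\rho,\pi)$. $U_t(s,a):=Q^{\pi_t}(s,a)-V^{\pi_t}(s)$, $\ell_t(s,a):=-\log\pi_t(a|s)$, $w_t(s,a):=\sigma(U_t(s,a)\ell_t(s,a)/\eta)$ with $\sigma(x)=1/(1+e^{-x})$, and $Z^t_s:=\sum_{a'}\pi_t(a'|s)e^{\alpha w_t(s,a')U_t(s,a')}$. *)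

From HB Require Import structures.
From mathcomp Require Import all_boot all_order all_algebra.
From mathcomp Require Import all_classical all_reals all_analysis.
Set Implicit Arguments. Unset Strict Implicit. Unset Printing Implicit Defensive.
Import Order.TTheory GRing.Theory Num.Theory numFieldNormedType.Exports.
Local Open Scope ring_scope.

Section MDP.
Context {R : realType} {S A : finType}.
Variables (P : S -> A -> S -> R) (* P s a s' = P(s' | s, a) *)
          (r : S -> A -> R) (gamma : R).

Definition is_policy (pi : S -> A -> R) : Prop :=
  (forall s a, 0 <= pi s a) /\ (forall s, \sum_(a : A) pi s a = 1).

Definition full_support (pi : S -> A -> R) : Prop := forall s a, 0 < pi s a.

Definition softmax (theta : S -> A -> R) : S -> A -> R :=
  fun s a => expR (theta s a) / \sum_(a' : A) expR (theta s a').

Definition pt_mass (s0 : S) : S -> R := fun s => if s == s0 then 1 else 0.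

Definition step_dist (pi : S -> A -> R) (mu : S -> R) : S -> R :=
  fun s' => \sum_(s : S) \sum_(a : A) mu s * pi s a * P s a s'.

Definition state_dist (pi : S -> A -> R) (mu : S -> R) (t : nat) : S -> R :=
  iter t (step_dist pi) mu.

Definition r_pi (pi : S -> A -> R) (s : S) : R := \sum_(a : A) pi s a * r s a.

Definition Vf (pi : S -> A -> R) (s : S) : R :=
  limn (series ((fun t : nat => gamma ^+ t * \sum_(s' : S) state_dist pi (pt_mass s) t s' * r_pi pi s') : R^nat)).

Definition Qf (pi : S -> A -> R) (s : S) (a : A) : R :=
  r s a + gamma * \sum_(s' : S) P s a s' * Vf pi s'.

Definition Adv (pi : S -> A -> R) (s : S) (a : A) : R := Qf pi s a - Vf pi s.

Definition Vrho (rho : S -> R) (pi : S -> A -> R) : R := \sum_(s : S) rho s * Vf pi s.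

Definition occ (rho : S -> R) (pi : S -> A -> R) (s : S) : R :=
  (1 - gamma) * limn (series ((fun t : nat => gamma ^+ t * state_dist pi rho t s) : R^nat)).

Definition optimal_policy (pistar : S -> A -> R) : Prop :=
  is_policy pistar /\ forall pi, is_policy pi -> forall s, Vf pi s <= Vf pistar s.

Definition sigmoid (x : R) : R := 1 / (1 + expR (- x)).

Definition dg_weight (eta : R) (pi : S -> A -> R) (s : S) (a : A) : R :=
  sigmoid (Adv pi s a * (- ln (pi s a)) / eta).

Definition dg_Z (eta alpha : R) (pi : S -> A -> R) (s : S) : R :=
  \sum_(a' : A) pi s a' * expR (alpha * dg_weight eta pi s a' * Adv pi s a').

Definition dg_step (eta alpha : R) (pi : S -> A -> R) : S -> A -> R :=
  fun s a => pi s a * expR (alpha * dg_weight eta pi s a * Adv pi s a) / dg_Z eta alpha pi s.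

Definition dg_iter (eta alpha : R) (pi0 : S -> A -> R) (t : nat) : S -> A -> R :=
  iter t (dg_step eta alpha) pi0.

End MDP.

From HB Require Import structures.
From mathcomp Require Import all_boot all_order all_algebra.
From mathcomp Require Import all_classical all_reals all_analysis.
Import Order.TTheory GRing.Theory Num.Theory numFieldNormedType.Exports.
Local Open Scope ring_scope. Local Open Scope classical_set_scope.

From mathcomp Require Import ring lra.

(* The DG update is a policy-improvement step: its exponent [alpha w_t U_t] has the sign of the
   advantage [U_t], so the one-step gain [sum_a pi_{t+1}(a|s) U_t(s,a)] is nonnegative and, by
   the performance-difference lemma, each [V^{pi_t}(s)] increases to a limit [Vinf(s) <= V*(s)].
   The gains, hence the excesses [pi_t(a|s) (e^{alpha w_t U_t} - 1) U_t(s,a)], then tend to 0.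
   If an action kept a positive limiting advantage, its exponent would stay bounded below while
   the normalisers [Z_t] tend to at most 1, so its probability would eventually increase and its
   excess could not vanish. Hence [Vinf] dominates its own Bellman backup, which forces
   [Vinf = V*]. Uniqueness makes [pi*] deterministic with every other action strictly
   suboptimal, and [pi_t(b|s) (V*(s) - Q*(s,b)) <= V*(s) - V^{pi_t}(s) -> 0] gives [pi_t -> pi*]. *)

Lemma cvg_sum {R : realType} {I : finType} (P : pred I) (F : I -> nat -> R) (l : I -> R) :
  (forall i, P i -> F i n @[n --> \oo] --> l i) ->
  \sum_(i | P i) F i n @[n --> \oo] --> \sum_(i | P i) l i.
Proof. exact: (@cvg_big R I +%R 0 P add_continuous nat \oo _ F l _). Qed.

Lemma ler_sum_term {R : numDomainType} {I : finType} (F : I -> R) i :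
  (forall j, 0 <= F j) -> F i <= \sum_j F j.
Proof. by move=> F_ge0; rewrite (bigD1 i) //= lerDl sumr_ge0. Qed.

Lemma cvg_coord_sum1 {R : realType} {I : finType} (u : nat -> I -> R) (p : I -> R) i0 :
  (forall n, \sum_i u n i = 1) -> \sum_i p i = 1 ->
  (forall i, i != i0 -> u n i @[n --> \oo] --> p i) -> u n i0 @[n --> \oo] --> p i0.
Proof.
move=> u_sum1 p_sum1 cvg_u.
have coordE (v : I -> R) : v i0 = \sum_i v i - \sum_(i | i != i0) v i.
  by rewrite (bigD1 i0) //= addrK.
rewrite (coordE p) p_sum1; under eq_fun do rewrite (coordE (u _)) u_sum1.
by apply: cvgB; [exact: cvg_cst | exact: cvg_sum].
Qed.

Section RealFacts.
Context {R : realType}.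

Lemma expR_ge1 (x : R) : 0 <= x -> 1 <= expR x.
Proof. by move=> x_ge0; rewrite leNgt expR_lt1 -leNgt. Qed.

Lemma expRM1_mul_ge0 (c x : R) : 0 <= c -> 0 <= (expR (c * x) - 1) * x.
Proof.
move=> c_ge0; have [x_ge0|x_lt0] := leP 0 x.
  by rewrite mulr_ge0 // subr_ge0 expR_ge1 // mulr_ge0.
apply: mulr_le0; last exact: ltW.
by rewrite subr_le0 expR_le1 mulr_ge0_le0 // ltW.
Qed.

Lemma expRM1_le_mul_expR (x : R) : expR x - 1 <= x * expR x.
Proof.
have : (1 - x) * expR x <= expR (- x) * expR x.
  by rewrite ler_wpM2r ?expR_ge0 // expR_ge1Dx.
by rewrite expRN mulVf ?gt_eqF ?expR_gt0 // mulrBl mul1r; lra.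
Qed.

(* For [0 < x <= e] use [e^x - 1 <= x e^x]; for [x > e] the second term alone suffices. *)
Lemma expRM1_le_split (x e : R) : 0 < e ->
  expR x - 1 <= e * expR e + (expR x - 1) * x / e.
Proof.
move=> e_gt0.
have tail_ge0 : 0 <= (expR x - 1) * x / e.
  apply: divr_ge0; last exact: ltW.
  by rewrite -{1}(mul1r x) expRM1_mul_ge0.
have ee_ge0 : 0 <= e * expR e by rewrite mulr_ge0 ?ltW ?expR_gt0.
have [x_le0|x_gt0] := leP x 0.
  have : expR x - 1 <= 0 by rewrite subr_le0 expR_le1.
  lra.
have [x_le_e|e_lt_x] := leP x e.
  have : x * expR x <= e * expR e.
    by apply: ler_pM; rewrite ?expR_ge0 ?ler_expR // ltW.
  have := expRM1_le_mul_expR x; lra.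
have : expR x - 1 <= (expR x - 1) * x / e.
  rewrite -mulrA; apply: ler_peMr; first by rewrite subr_ge0 expR_ge1 // ltW.
  by rewrite ler_pdivlMr // mul1r ltW.
lra.
Qed.

Lemma exists_mul_expR_le {c : R} : 0 < c ->
  exists2 e : R, 0 < e & e * expR e <= c.
Proof.
move=> c_gt0; set E := expR (1 : R); have E_gt0 : 0 < E := expR_gt0 1.
have den_gt0 : 0 < E + c by rewrite addr_gt0.
exists (c / (E + c)); first by rewrite divr_gt0.
have e_le1 : c / (E + c) <= 1 by rewrite ler_pdivrMr // mul1r lerDr ltW.
apply: le_trans (_ : c / (E + c) * E <= _).
  by apply: ler_wpM2l; rewrite ?ler_expR // divr_ge0 // ltW.
by rewrite mulrAC ler_pdivrMr // mulrDr lerDl mulr_ge0 ?ltW.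
Qed.

Lemma nondecreasing_near_lbound (u : nat -> R) :
  (forall n, 0 < u n) -> (\forall n \near \oo, u n <= u n.+1) ->
  exists2 m, 0 < m & \forall n \near \oo, m <= u n.
Proof.
move=> u_gt0 [N _ uS]; exists (u N) => //; exists N => // n /= /subnKC <-.
elim: (n - N)%N => [|k IH]; first by rewrite addn0.
by rewrite addnS (le_trans IH) // uS //= leq_addr.
Qed.

Lemma sigmoid_gt0 (y : R) : 0 < sigmoid y.
Proof. by rewrite /sigmoid divr_gt0 // ltr_pwDr ?expR_gt0. Qed.

Lemma sigmoid_le1 (y : R) : sigmoid y <= 1.
Proof. by rewrite /sigmoid ler_pdivrMr ?mul1r ?lerDl ?expR_ge0 // ltr_pwDr ?expR_gt0. Qed.

Lemma sigmoid_ge_half (y : R) : 0 <= y -> 2^-1 <= sigmoid y.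
Proof.
move=> y_ge0; have e_gt0 := expR_gt0 (- y).
have e_le1 : expR (- y) <= 1 by rewrite expR_le1 oppr_le0.
rewrite /sigmoid ler_pdivlMr ?ltr_pwDr // mulrC -ler_pdivlMr ?invr_gt0 // invrK.
lra.
Qed.

End RealFacts.

Section MDP.
Context {R : realType} {S A : finType}.
Variables (P : S -> A -> S -> R) (r : S -> A -> R) (gamma : R).
Hypotheses (P_ge0 : forall s a s', 0 <= P s a s')
  (P_sum1 : forall s a, \sum_(s' : S) P s a s' = 1)
  (r_bounds : forall s a, 0 <= r s a <= 1) (gamma_bounds : 0 <= gamma < 1).

Local Notation V := (Vf P r gamma).
Local Notation Q := (Qf P r gamma).
Local Notation U := (Adv P r gamma).
Local Notation Vmax := (1 - gamma)^-1.

Definition Ppi (pi : S -> A -> R) (s s' : S) : R := \sum_(a : A) pi s a * P s a s'.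

Definition backup (W : S -> R) (s : S) (a : A) : R :=
  r s a + gamma * \sum_(s' : S) P s a s' * W s'.

Definition reward_seq (pi : S -> A -> R) (s : S) (t : nat) : R :=
  \sum_(s' : S) state_dist P pi (pt_mass s) t s' * r_pi r pi s'.

Definition Vn (pi : S -> A -> R) (s : S) : R^nat :=
  series (fun t => gamma ^+ t * reward_seq pi s t).

Lemma gamma_ge0 : 0 <= gamma.
Proof. by case/andP: gamma_bounds. Qed.

Lemma Vmax_gt0 : 0 < Vmax.
Proof. by rewrite invr_gt0 subr_gt0; case/andP: gamma_bounds. Qed.

Lemma Vmax_fix : Vmax = 1 + gamma * Vmax.
Proof. by field; rewrite subr_eq0 eq_sym lt_eqF //; case/andP: gamma_bounds. Qed.

Lemma step_dist_sum pi (c : S -> R) (mu : S -> S -> R) y :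
  step_dist P pi (fun x => \sum_(i : S) c i * mu i x) y =
  \sum_(i : S) c i * step_dist P pi (mu i) y.
Proof.
rewrite /step_dist.
transitivity (\sum_(s : S) \sum_(i : S) \sum_(a : A) c i * (mu i s * pi s a * P s a y)).
  apply: eq_bigr => s _; rewrite exchange_big; apply: eq_bigr => a _.
  by rewrite !mulr_suml; apply: eq_bigr => i _; rewrite !mulrA.
rewrite exchange_big; apply: eq_bigr => i _.
by rewrite mulr_sumr; apply: eq_bigr => s _; rewrite mulr_sumr.
Qed.

Lemma state_dist_sum pi (c : S -> R) (mu : S -> S -> R) t y :
  state_dist P pi (fun x => \sum_(i : S) c i * mu i x) t y =
  \sum_(i : S) c i * state_dist P pi (mu i) t y.
Proof.
elim: t y => [//|t IH] y.
by rewrite /state_dist iterS -/(state_dist _ _ _ t) (funext IH) step_dist_sum.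
Qed.

Lemma step_dist_pt_mass pi s :
  step_dist P pi (pt_mass s) = (fun y => \sum_(s' : S) Ppi pi s s' * pt_mass s' y).
Proof.
apply/funext => y; rewrite /step_dist (bigD1 s) //= [X in _ + X]big1; last first.
  by move=> s1 /negbTE s1s; apply: big1 => a _; rewrite /pt_mass s1s !mul0r.
rewrite addr0 [RHS](bigD1 y) //= [X in _ + X]big1; last first.
  by move=> s1 /negbTE s1y; rewrite /pt_mass eq_sym s1y mulr0.
by rewrite /pt_mass !eqxx addr0 mulr1; apply: eq_bigr => a _; rewrite mul1r.
Qed.

Lemma reward_seq0 pi s : reward_seq pi s 0 = r_pi r pi s.
Proof.
rewrite /reward_seq /= (bigD1 s) //= [X in _ + X]big1; last first.
  by move=> s1 /negbTE s1s; rewrite /pt_mass s1s mul0r.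
by rewrite /pt_mass eqxx mul1r addr0.
Qed.

Lemma reward_seqS pi s t :
  reward_seq pi s t.+1 = \sum_(s' : S) Ppi pi s s' * reward_seq pi s' t.
Proof.
rewrite /reward_seq /state_dist iterSr step_dist_pt_mass -/(state_dist _ _ _ _).
under eq_bigr do rewrite state_dist_sum mulr_suml.
rewrite exchange_big; apply: eq_bigr => s' _.
by rewrite mulr_sumr; apply: eq_bigr => y _; rewrite mulrA.
Qed.

Lemma VnS pi s n :
  Vn pi s n.+1 = r_pi r pi s + gamma * \sum_(s' : S) Ppi pi s s' * Vn pi s' n.
Proof.
rewrite /Vn /series /= big_nat_recl // reward_seq0 expr0 mul1r; congr (_ + _).
transitivity (\sum_(0 <= k < n) \sum_(s' : S)
    gamma * (Ppi pi s s' * (gamma ^+ k * reward_seq pi s' k))).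
  apply: eq_bigr => k _; rewrite reward_seqS exprS !mulr_sumr.
  by apply: eq_bigr => s' _; ring.
by rewrite exchange_big mulr_sumr; apply: eq_bigr => s' _; rewrite -!mulr_sumr.
Qed.

Lemma avg_backup pi (W : S -> R) s :
  \sum_(a : A) pi s a * backup W s a =
  r_pi r pi s + gamma * \sum_(s' : S) Ppi pi s s' * W s'.
Proof.
under eq_bigr do rewrite mulrDr; rewrite big_split; congr (_ + _).
rewrite /Ppi mulr_sumr; under [RHS]eq_bigr do rewrite mulr_suml mulr_sumr.
rewrite [RHS]exchange_big; apply: eq_bigr => a _.
by rewrite !mulr_sumr; apply: eq_bigr => s' _; ring.
Qed.

Section Policy.
Context {pol : S -> A -> R} (pol_policy : is_policy pol).

Lemma Ppi_ge0 s s' : 0 <= Ppi pol s s'.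
Proof. by case: pol_policy => pol_ge0 _; apply: sumr_ge0 => a _; rewrite mulr_ge0. Qed.

Lemma Ppi_sum1 s : \sum_(s' : S) Ppi pol s s' = 1.
Proof.
case: pol_policy => _ pol_sum1; rewrite /Ppi exchange_big -(pol_sum1 s).
by apply: eq_bigr => a _; rewrite -mulr_sumr P_sum1 mulr1.
Qed.

Lemma Ppi_avg_bounds {f : S -> R} {lo hi : R} :
  (forall s, lo <= f s <= hi) -> forall s, lo <= \sum_(s' : S) Ppi pol s s' * f s' <= hi.
Proof.
move=> f_bounds s; rewrite -[lo]mulr1 -[hi]mulr1 -(Ppi_sum1 s) !mulr_sumr.
apply/andP; split; apply: ler_sum => s' _; rewrite mulrC.
  by rewrite ler_wpM2l ?Ppi_ge0 //; case/andP: (f_bounds s').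
by rewrite ler_wpM2r ?Ppi_ge0 //; case/andP: (f_bounds s').
Qed.

Lemma policy_le1 s a : pol s a <= 1.
Proof. by case: pol_policy => pol_ge0 pol_sum1; rewrite -(pol_sum1 s) ler_sum_term. Qed.

Lemma policy_exists_gt0 s : exists a, 0 < pol s a.
Proof.
case: pol_policy => pol_ge0 pol_sum1.
have [|a /andP[_ pos]] := @psumr_neq0P _ _ predT (pol s) (fun a _ => pol_ge0 s a).
  by rewrite pol_sum1; apply/eqP; exact: oner_neq0.
by exists a.
Qed.

Lemma r_pi_bounds s : 0 <= r_pi r pol s <= 1.
Proof.
case: pol_policy => pol_ge0 pol_sum1; rewrite /r_pi -(pol_sum1 s).
apply/andP; split; first by apply: sumr_ge0 => a _; case/andP: (r_bounds s a) => *; rewrite mulr_ge0.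
by apply: ler_sum => a _; case/andP: (r_bounds s a) => *; rewrite ler_piMr.
Qed.

Lemma reward_seq_bounds t s : 0 <= reward_seq pol s t <= 1.
Proof.
elim: t s => [|t IH] s; first by rewrite reward_seq0 r_pi_bounds.
by rewrite reward_seqS Ppi_avg_bounds.
Qed.

Lemma Vn_bounds n s : 0 <= Vn pol s n <= Vmax.
Proof.
elim: n s => [|n IH] s; first by rewrite /Vn /series /= big_geq // lexx ltW ?Vmax_gt0.
rewrite VnS; have /andP[avg_ge0 avg_le] := Ppi_avg_bounds IH s.
have /andP[r_ge0 r_le1] := r_pi_bounds s.
rewrite addr_ge0 ?mulr_ge0 ?gamma_ge0 //= Vmax_fix lerD // ler_wpM2l ?gamma_ge0 //.
Qed.

Lemma Vn_cvg s : cvgn (Vn pol s).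
Proof.
apply: nondecreasing_is_cvgn.
  apply: nondecreasing_series => t _ _; rewrite mulr_ge0 ?exprn_ge0 ?gamma_ge0 //.
  by case/andP: (reward_seq_bounds t s).
by exists Vmax => _ [n _ <-]; case/andP: (Vn_bounds n s).
Qed.

Lemma Vf_bounds s : 0 <= V pol s <= Vmax.
Proof.
have Vn_cvg' := Vn_cvg s; apply/andP; split.
  by apply: limr_ge => //; near=> n; case/andP: (Vn_bounds n s).
by apply: limr_le => //; near=> n; case/andP: (Vn_bounds n s).
Unshelve. all: by end_near.
Qed.

Lemma Vf_bellman s :
  V pol s = r_pi r pol s + gamma * \sum_(s' : S) Ppi pol s s' * V pol s'.
Proof.
have VnS_cvg : Vn pol s n.+1 @[n --> \oo] -->
    r_pi r pol s + gamma * \sum_(s' : S) Ppi pol s s' * V pol s'.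
  under eq_fun do rewrite VnS.
  apply: cvgD; first exact: cvg_cst.
  by apply: cvgMr; apply: cvg_sum => s' _; apply: cvgMr; exact: Vn_cvg.
have := Vn_cvg s; rewrite -cvg_shiftS => Vn_cvg'.
exact: cvg_unique Vn_cvg' VnS_cvg.
Qed.

Lemma Vf_avg_Q s : V pol s = \sum_(a : A) pol s a * Q pol s a.
Proof. by rewrite (avg_backup pol (V pol)) -Vf_bellman. Qed.

Lemma Adv_avg0 s : \sum_(a : A) pol s a * U pol s a = 0.
Proof.
case: pol_policy => _ pol_sum1; rewrite /Adv; under eq_bigr do rewrite mulrBr.
by rewrite sumrB -mulr_suml pol_sum1 mul1r -Vf_avg_Q subrr.
Qed.

Lemma Qf_le s a : Q pol s a <= Vmax.
Proof.
have /andP[_ r_le1] := r_bounds s a.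
rewrite /Qf Vmax_fix lerD // ler_wpM2l ?gamma_ge0 //.
rewrite [leRHS](_ : _ = \sum_(s' : S) P s a s' * Vmax); last by rewrite -mulr_suml P_sum1 mul1r.
by apply: ler_sum => s' _; rewrite ler_wpM2l //; case/andP: (Vf_bounds s').
Qed.

Lemma Adv_le s a : U pol s a <= Vmax.
Proof. by have /andP[V_ge0 _] := Vf_bounds s; rewrite /Adv lerBlDr ler_wpDr ?Qf_le. Qed.

End Policy.

Lemma discounted_super_ge0 {pol} (D : S -> R) : is_policy pol ->
  (forall s, gamma * \sum_(s' : S) Ppi pol s s' * D s' <= D s) -> forall s, 0 <= D s.
Proof.
move=> pol_policy D_super s.
have [s0 _ D_min] := @arg_minP _ R S s predT D isT.
suff D0_ge0 : 0 <= D s0 by apply: le_trans D0_ge0 (D_min s isT).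
have : gamma * D s0 <= D s0.
  apply: le_trans (D_super s0); rewrite ler_wpM2l ?gamma_ge0 //.
  rewrite -[leLHS]mul1r -(Ppi_sum1 pol_policy s0) mulr_suml.
  by apply: ler_sum => s' _; rewrite ler_wpM2l ?Ppi_ge0 ?D_min.
by case/andP: gamma_bounds; nra.
Qed.

Lemma performance_difference pol pol' s : is_policy pol' ->
  V pol' s - V pol s = \sum_(a : A) pol' s a * U pol s a
    + gamma * \sum_(s' : S) Ppi pol' s s' * (V pol' s' - V pol s').
Proof.
move=> pol'_policy; have [_ pol'_sum1] := pol'_policy.
have -> : \sum_(a : A) pol' s a * U pol s a =
    r_pi r pol' s + gamma * \sum_(s' : S) Ppi pol' s s' * V pol s' - V pol s.
  rewrite -avg_backup /Adv; under eq_bigr do rewrite mulrBr.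
  by rewrite sumrB -mulr_suml pol'_sum1 mul1r.
have -> : \sum_(s' : S) Ppi pol' s s' * (V pol' s' - V pol s') =
    \sum_(s' : S) Ppi pol' s s' * V pol' s' - \sum_(s' : S) Ppi pol' s s' * V pol s'.
  by rewrite -sumrB; apply: eq_bigr => s' _; rewrite mulrBr.
rewrite [V pol' s]Vf_bellman //; ring.
Qed.

Lemma policy_improvement {pol pol'} : is_policy pol' ->
  (forall s, 0 <= \sum_(a : A) pol' s a * U pol s a) ->
  forall s, \sum_(a : A) pol' s a * U pol s a <= V pol' s - V pol s.
Proof.
move=> pol'_policy gain_ge0.
have V_gain_ge0 : forall s, 0 <= V pol' s - V pol s.
  apply: (discounted_super_ge0 (fun s => V pol' s - V pol s) pol'_policy) => s.
  by rewrite [leRHS]performance_difference // lerDr.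
move=> s; rewrite performance_difference // lerDl mulr_ge0 ?gamma_ge0 //.
by apply: sumr_ge0 => s' _; rewrite mulr_ge0 ?Ppi_ge0.
Qed.

Lemma Vf_le_super {pol} (W : S -> R) : is_policy pol ->
  (forall s a, backup W s a <= W s) -> forall s, V pol s <= W s.
Proof.
move=> pol_policy W_super s; rewrite -subr_ge0; move: s.
apply: (discounted_super_ge0 (fun s => W s - V pol s) pol_policy) => s.
have : \sum_(a : A) pol s a * backup W s a <= W s.
  have [pol_ge0 pol_sum1] := pol_policy.
  rewrite -[leRHS]mul1r -(pol_sum1 s) mulr_suml.
  by apply: ler_sum => a _; rewrite ler_wpM2l.
have -> : \sum_(s' : S) Ppi pol s s' * (W s' - V pol s') =
    \sum_(s' : S) Ppi pol s s' * W s' - \sum_(s' : S) Ppi pol s s' * V pol s'.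
  by rewrite -sumrB; apply: eq_bigr => s' _; rewrite mulrBr.
rewrite avg_backup [V pol s]Vf_bellman //; lra.
Qed.

Definition switch (pol : S -> A -> R) (s0 : S) (a0 : A) : S -> A -> R :=
  fun s a => if s == s0 then (a == a0)%:R else pol s a.

Lemma switch_policy {pol} s0 a0 : is_policy pol -> is_policy (switch pol s0 a0).
Proof.
case=> pol_ge0 pol_sum1; split=> [s a|s]; rewrite /switch; case: eqP => _ //.
by rewrite (bigD1 a0) //= eqxx big1 ?addr0 // => a /negbTE ->.
Qed.

Lemma switch_gain {pol} s0 a0 s : is_policy pol ->
  \sum_(a : A) switch pol s0 a0 s a * U pol s a = if s == s0 then U pol s a0 else 0.
Proof.
move=> pol_policy; rewrite /switch; case: eqP => _; last exact: Adv_avg0.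
by rewrite (bigD1 a0) //= eqxx mul1r big1 ?addr0 // => a /negbTE ->; rewrite mul0r.
Qed.

Section Optimality.
Context {pistar : S -> A -> R} (pistar_opt : optimal_policy P r gamma pistar).

Lemma optimal_Q_le_V s a : Q pistar s a <= V pistar s.
Proof.
have [pistar_policy pistar_max] := pistar_opt.
rewrite leNgt; apply/negP => V_lt_Q.
(* Playing [a] at [s] and [pistar] elsewhere would gain [U pistar s a > 0] at [s]. *)
have pol_policy := switch_policy s a pistar_policy.
have gain_ge0 : forall s', 0 <= \sum_(b : A) switch pistar s a s' b * U pistar s' b.
  by move=> s'; rewrite switch_gain //; case: eqP => [->|_] //; rewrite /Adv subr_ge0 ltW.
have := policy_improvement pol_policy gain_ge0 s; rewrite switch_gain // eqxx.
have := pistar_max _ pol_policy s; rewrite /Adv; lra.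
Qed.

Lemma optimal_support s a : 0 < pistar s a -> Q pistar s a = V pistar s.
Proof.
move=> pistar_gt0; have [[pistar_ge0 _] _] := pistar_opt.
have gap_ge0 b : true -> 0 <= pistar s b * (V pistar s - Q pistar s b).
  by move=> _; rewrite mulr_ge0 // subr_ge0 optimal_Q_le_V.
have gap_sum0 : \sum_(b : A) pistar s b * (V pistar s - Q pistar s b) = 0.
  rewrite -[RHS]oppr0 -[in RHS](Adv_avg0 pistar_opt.1 s) -sumrN.
  by apply: eq_bigr => b _; rewrite /Adv -mulrN opprB.
move/eqP: (psumr_eq0P gap_ge0 gap_sum0 (i := a) isT).
by rewrite mulf_eq0 gt_eqF //= subr_eq0 => /eqP ->.
Qed.

Lemma Qf_le_optimal {pol} s a : is_policy pol -> Q pol s a <= Q pistar s a.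
Proof.
move=> pol_policy; rewrite /Qf lerD2l ler_wpM2l ?gamma_ge0 //.
by apply: ler_sum => s' _; rewrite ler_wpM2l // pistar_opt.2.
Qed.

Lemma greedy_optimal {pol} : is_policy pol ->
  (forall s a, 0 < pol s a -> Q pistar s a = V pistar s) -> optimal_policy P r gamma pol.
Proof.
move=> pol_policy greedy; split=> // pol' pol'_policy s.
apply: le_trans (pistar_opt.2 pol' pol'_policy s) _; rewrite -subr_ge0.
have gain0 s' : \sum_(a : A) pol s' a * U pistar s' a = 0.
  apply: big1 => a _; have [pol_ge0 _] := pol_policy.
  have := pol_ge0 s' a; rewrite le_eqVlt => /orP[/eqP <-|/greedy Q_eq].
    by rewrite mul0r.
  by rewrite /Adv Q_eq subrr mulr0.
by rewrite -(gain0 s) policy_improvement // => s'; rewrite gain0.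
Qed.

Lemma suboptimality_gap {pol} s b : is_policy pol ->
  pol s b * (V pistar s - Q pistar s b) <= V pistar s - V pol s.
Proof.
move=> pol_policy; have [pol_ge0 pol_sum1] := pol_policy.
have -> : V pistar s - V pol s = \sum_(c : A) pol s c * (V pistar s - Q pol s c).
  under eq_bigr do rewrite mulrBr.
  by rewrite sumrB -mulr_suml pol_sum1 mul1r -Vf_avg_Q.
have term_ge0 c : 0 <= pol s c * (V pistar s - Q pol s c).
  by rewrite mulr_ge0 // subr_ge0 (le_trans (Qf_le_optimal _ _ pol_policy)) ?optimal_Q_le_V.
apply: le_trans (ler_sum_term _ b term_ge0).
by rewrite ler_wpM2l // lerD2l lerN2 Qf_le_optimal.
Qed.

Hypothesis pistar_unique : forall pol, optimal_policy P r gamma pol -> pol = pistar.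

Lemma optimal_deterministic s a0 :
  Q pistar s a0 = V pistar s -> forall a, pistar s a = (a == a0)%:R.
Proof.
move=> Q_eq a; have [pistar_policy _] := pistar_opt.
have <- : switch pistar s a0 = pistar.
  apply/pistar_unique/greedy_optimal; first exact: switch_policy.
  move=> s' b; rewrite /switch; case: eqP => [->|_]; last exact: optimal_support.
  by case: eqP => [-> _ //|_]; rewrite ltxx.
by rewrite /switch eqxx.
Qed.

End Optimality.

Definition dg_exponent (eta alpha : R) (pol : S -> A -> R) (s : S) (a : A) : R :=
  alpha * dg_weight P r gamma eta pol s a * U pol s a.

Definition dg_excess (eta alpha : R) (pol : S -> A -> R) (s : S) : R :=
  \sum_(a : A) pol s a * ((expR (dg_exponent eta alpha pol s a) - 1) * U pol s a).

Section DGStep.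
Context {eta alpha : R} (eta_gt0 : 0 < eta) (alpha_ge0 : 0 <= alpha).

Local Notation w := (dg_weight P r gamma eta).
Local Notation Z := (dg_Z P r gamma eta alpha).
Local Notation step := (dg_step P r gamma eta alpha).
Local Notation dg_exponent := (dg_exponent eta alpha).
Local Notation dg_excess := (dg_excess eta alpha).

Lemma dg_weight_ge0 pol s a : 0 <= w pol s a.
Proof. exact/ltW/sigmoid_gt0. Qed.

Lemma dg_weight_le1 pol s a : w pol s a <= 1.
Proof. exact: sigmoid_le1. Qed.

Lemma dg_weight_ge_half {pol} s a : is_policy pol -> 0 <= U pol s a -> 2^-1 <= w pol s a.
Proof.
move=> pol_policy U_ge0; apply/sigmoid_ge_half/divr_ge0; last exact: ltW.
by rewrite mulr_ge0 // oppr_ge0 ln_le0 // policy_le1.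
Qed.

Lemma dg_exponent_Adv_ge0 pol s a : 0 <= (expR (dg_exponent pol s a) - 1) * U pol s a.
Proof. by rewrite expRM1_mul_ge0 // mulr_ge0 ?dg_weight_ge0. Qed.

Lemma dg_excess_term_ge0 {pol} s a : is_policy pol ->
  0 <= pol s a * ((expR (dg_exponent pol s a) - 1) * U pol s a).
Proof. by case=> pol_ge0 _; rewrite mulr_ge0 ?dg_exponent_Adv_ge0. Qed.

Lemma dg_excess_ge0 {pol} s : is_policy pol -> 0 <= dg_excess pol s.
Proof. by move=> pol_policy; apply: sumr_ge0 => a _; exact: dg_excess_term_ge0. Qed.

Lemma dg_Z_gt0 {pol} s : is_policy pol -> 0 < Z pol s.
Proof.
move=> pol_policy; have [a pos] := policy_exists_gt0 pol_policy s.
have [pol_ge0 _] := pol_policy.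
apply: lt_le_trans (ler_sum_term _ a _) => [|b]; first by rewrite mulr_gt0 ?expR_gt0.
by rewrite mulr_ge0 ?expR_ge0.
Qed.

Lemma dg_step_policy {pol} : is_policy pol -> is_policy (step pol).
Proof.
move=> pol_policy; have [pol_ge0 _] := pol_policy.
split=> [s a|s].
  by apply: divr_ge0; [rewrite mulr_ge0 ?expR_ge0 | exact/ltW/dg_Z_gt0].
by rewrite /dg_step -mulr_suml divff // gt_eqF ?dg_Z_gt0.
Qed.

Lemma dg_step_full_support {pol} : is_policy pol -> full_support pol -> full_support (step pol).
Proof.
move=> pol_policy pol_gt0 s a.
by apply: divr_gt0; [rewrite mulr_gt0 ?expR_gt0 | exact: dg_Z_gt0].
Qed.

Lemma dg_step_gain {pol} s : is_policy pol ->
  \sum_(a : A) step pol s a * U pol s a = dg_excess pol s / Z pol s.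
Proof.
move=> pol_policy; rewrite /dg_excess.
under [in RHS]eq_bigr do rewrite mulrBl mul1r mulrBr.
rewrite sumrB Adv_avg0 // subr0 mulr_suml; apply: eq_bigr => a _.
by rewrite /dg_step /dg_exponent; ring.
Qed.

Lemma dg_step_gain_ge0 {pol} s : is_policy pol -> 0 <= \sum_(a : A) step pol s a * U pol s a.
Proof. by move=> pol_policy; rewrite dg_step_gain // divr_ge0 ?dg_excess_ge0 ?ltW ?dg_Z_gt0. Qed.

Lemma dg_Z_le {pol} s : is_policy pol -> Z pol s <= expR (alpha * Vmax).
Proof.
move=> pol_policy; have [pol_ge0 pol_sum1] := pol_policy.
rewrite [leRHS](_ : _ = \sum_(a : A) pol s a * expR (alpha * Vmax)); last first.
  by rewrite -mulr_suml pol_sum1 mul1r.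
apply: ler_sum => a _; rewrite ler_wpM2l // ler_expR -mulrA ler_wpM2l //.
have [U_ge0|U_lt0] := leP 0 (U pol s a).
  by rewrite (le_trans _ (Adv_le pol_policy s a)) // ler_piMl ?dg_weight_le1.
by rewrite (le_trans _ (ltW Vmax_gt0)) // mulr_ge0_le0 ?dg_weight_ge0 ?ltW.
Qed.

Lemma dg_Z_sub1_le {pol} s (e : R) : is_policy pol -> 0 < e ->
  Z pol s - 1 <= e * expR e + alpha / e * dg_excess pol s.
Proof.
move=> pol_policy e_gt0; have [pol_ge0 pol_sum1] := pol_policy.
have -> : Z pol s - 1 = \sum_(a : A) pol s a * (expR (dg_exponent pol s a) - 1).
  by under eq_bigr do rewrite mulrBr mulr1; rewrite sumrB pol_sum1.
rewrite [X in X + _](_ : _ = \sum_(a : A) pol s a * (e * expR e)); last first.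
  by rewrite -mulr_suml pol_sum1 mul1r.
rewrite /dg_excess mulr_sumr -big_split.
apply: ler_sum => a _; set x := dg_exponent pol s a.
apply: le_trans (_ : pol s a * (e * expR e + (expR x - 1) * x / e) <= _).
  by rewrite ler_wpM2l ?expRM1_le_split.
have excess_ge0 : 0 <= (expR x - 1) * U pol s a := dg_exponent_Adv_ge0 pol s a.
rewrite mulrDr lerD2l.
rewrite [leLHS](_ : _ = alpha / e * (pol s a * ((expR x - 1) * U pol s a)) * w pol s a); last first.
  by rewrite /x /dg_exponent; field; rewrite gt_eqF.
apply: ler_piMr; last exact: dg_weight_le1.
by apply: mulr_ge0; [rewrite divr_ge0 // ltW | exact: mulr_ge0].
Qed.

Lemma dg_step_ge {pol} s a : is_policy pol ->
  Z pol s <= expR (dg_exponent pol s a) -> pol s a <= step pol s a.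
Proof.
move=> pol_policy Z_le; have [pol_ge0 _] := pol_policy.
by rewrite /dg_step ler_pdivlMr ?dg_Z_gt0 // ler_wpM2l.
Qed.

End DGStep.

Section DGIteration.
Variables (eta alpha : R) (pi0 : S -> A -> R).
Hypotheses (eta_gt0 : 0 < eta) (alpha_gt0 : 0 < alpha)
  (pi0_policy : is_policy pi0) (pi0_full : full_support pi0).
Context {pistar : S -> A -> R} (pistar_opt : optimal_policy P r gamma pistar).

Local Notation pit := (dg_iter P r gamma eta alpha pi0).
Local Notation Z := (dg_Z P r gamma eta alpha).

Lemma pit_policy t : is_policy (pit t).
Proof. by elim: t => [//|t IH]; exact: dg_step_policy. Qed.

Lemma pit_full_support t : full_support (pit t).
Proof. by elim: t => [//|t IH]; exact: dg_step_full_support (pit_policy t) IH. Qed.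

Lemma pit_gain_ge0 t s : 0 <= \sum_(a : A) pit t.+1 s a * U (pit t) s a.
Proof. by apply: dg_step_gain_ge0; [exact: ltW | exact: pit_policy]. Qed.

Lemma pit_gain_le t s :
  \sum_(a : A) pit t.+1 s a * U (pit t) s a <= V (pit t.+1) s - V (pit t) s.
Proof. by apply: policy_improvement; [exact: pit_policy | move=> s'; exact: pit_gain_ge0]. Qed.

Lemma Vf_pit_nondecreasing s : nondecreasing_seq (fun t => V (pit t) s).
Proof.
by apply/nondecreasing_seqP => t; rewrite -subr_ge0 (le_trans (pit_gain_ge0 t s)) ?pit_gain_le.
Qed.

Definition Vinf (s : S) : R := limn (fun t => V (pit t) s).

Lemma cvg_Vf_pit s : V (pit t) s @[t --> \oo] --> Vinf s.
Proof.
apply: nondecreasing_is_cvgn; first exact: Vf_pit_nondecreasing.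
by exists (V pistar s) => _ [t _ <-]; exact: pistar_opt.2 _ (pit_policy t) s.
Qed.

Lemma cvg_gain0 s : \sum_(a : A) pit t.+1 s a * U (pit t) s a @[t --> \oo] --> 0.
Proof.
apply: (squeeze_cvgr (f := fun=> 0) (h := fun t => V (pit t.+1) s - V (pit t) s)).
- by near=> t; rewrite pit_gain_ge0 pit_gain_le.
- exact: cvg_cst.
- rewrite -(subrr (Vinf s)); apply: cvgB; last exact: cvg_Vf_pit.
  by rewrite (cvg_shiftS (fun t => V (pit t) s)); exact: cvg_Vf_pit.
Unshelve. all: by end_near.
Qed.

Lemma cvg_excess0 s : dg_excess eta alpha (pit t) s @[t --> \oo] --> 0.
Proof.
set C := expR (alpha * Vmax).
apply: (squeeze_cvgr (f := fun=> 0)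
  (h := fun t => C * \sum_(a : A) pit t.+1 s a * U (pit t) s a)).
- near=> t; rewrite (dg_excess_ge0 (ltW alpha_gt0) _ (pit_policy t)) /=.
  rewrite (_ : dg_excess _ _ _ _ = (\sum_(a : A) pit t.+1 s a * U (pit t) s a) * Z (pit t) s).
    rewrite [leRHS]mulrC; apply: ler_wpM2l; first exact: pit_gain_ge0.
    by apply: dg_Z_le; [exact: ltW | exact: pit_policy].
  rewrite [pit t.+1]/= dg_step_gain; last exact: pit_policy.
  by rewrite divfK // gt_eqF // dg_Z_gt0 //; exact: pit_policy.
- exact: cvg_cst.
- by rewrite -[X in _ --> X](mulr0 C); apply: cvgMr; exact: cvg_gain0.
Unshelve. all: by end_near.
Qed.

Lemma cvg_excess_term0 s a :
  pit t s a * ((expR (dg_exponent eta alpha (pit t) s a) - 1) * U (pit t) s a)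
    @[t --> \oo] --> 0.
Proof.
apply: (squeeze_cvgr (f := fun=> 0) (h := fun t => dg_excess eta alpha (pit t) s)).
- near=> t; have term_ge0 b := dg_excess_term_ge0 (ltW alpha_gt0) s b (pit_policy t).
  by rewrite term_ge0 ler_sum_term.
- exact: cvg_cst.
- exact: cvg_excess0.
Unshelve. all: by end_near.
Qed.

Lemma cvg_Adv_pit s a : U (pit t) s a @[t --> \oo] --> backup Vinf s a - Vinf s.
Proof.
apply: cvgB; last exact: cvg_Vf_pit.
apply: cvgD; first exact: cvg_cst.
by apply: cvgMr; apply: cvg_sum => s' _; apply: cvgMr; exact: cvg_Vf_pit.
Qed.

Lemma near_dg_Z_lt s c : 0 < c -> \forall t \near \oo, Z (pit t) s < 1 + c.
Proof.
move=> c_gt0; have [e e_gt0 e_le] := exists_mul_expR_le (divr_gt0 c_gt0 (ltr0Sn R 1)).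
have : \forall t \near \oo, alpha / e * dg_excess eta alpha (pit t) s < c / 2.
  apply: (cvgr_lt 0); last by rewrite divr_gt0.
  by rewrite -(mulr0 (alpha / e)); apply: cvgMr; exact: cvg_excess0.
apply: filterS => t small.
rewrite -ltrBlDl (splitr c); apply: le_lt_trans (ler_ltD e_le small).
exact: (@dg_Z_sub1_le eta alpha (ltW alpha_gt0) _ s e (pit_policy t) e_gt0).
Qed.

Lemma near_dg_exponent_ge s a (d : R) : 0 <= d ->
  (\forall t \near \oo, d <= U (pit t) s a) ->
  \forall t \near \oo, alpha * (d / 2) <= dg_exponent eta alpha (pit t) s a.
Proof.
move=> d_ge0; apply: filterS => t U_ge.
have U_ge0 : 0 <= U (pit t) s a := le_trans d_ge0 U_ge.
rewrite /dg_exponent -mulrA; apply: ler_wpM2l; first exact: ltW.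
rewrite [leLHS]mulrC; apply: ler_pM; [by [] | exact: d_ge0 | | exact: U_ge].
exact: dg_weight_ge_half (pit_policy t) U_ge0.
Qed.

Lemma near_pit_lbound s a c : 0 < c ->
  (\forall t \near \oo, c <= dg_exponent eta alpha (pit t) s a) ->
  exists2 m, 0 < m & \forall t \near \oo, m <= pit t s a.
Proof.
move=> c_gt0 x_ge; apply: nondecreasing_near_lbound => [t|]; first exact: pit_full_support.
near=> t; apply: dg_step_ge; first exact: pit_policy.
have Z_lt : Z (pit t) s < 1 + c by near: t; exact: near_dg_Z_lt.
have c_le_x : c <= dg_exponent eta alpha (pit t) s a by near: t; exact: x_ge.
by rewrite (le_trans (ltW Z_lt)) // (le_trans (expR_ge1Dx c)) // ler_expR.
Unshelve. all: by end_near.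
Qed.

Lemma backup_Vinf_le s a : backup Vinf s a <= Vinf s.
Proof.
rewrite -subr_le0 leNgt; apply/negP => d_gt0; set d := backup Vinf s a - Vinf s in d_gt0.
have U_ge : \forall t \near \oo, d / 2 <= U (pit t) s a.
  by apply: (cvgr_ge _ (cvg_Adv_pit s a)); rewrite ltr_pdivrMr // ltr_pMr // ltr1n.
set c := alpha * (d / 2 / 2).
have c_gt0 : 0 < c by rewrite mulr_gt0 // !divr_gt0.
have x_ge := near_dg_exponent_ge s a (d / 2) (divr_ge0 (ltW d_gt0) (ler0n R 2)) U_ge.
have [m m_gt0 pit_ge] := near_pit_lbound s a c c_gt0 x_ge.
set kappa := m * ((expR c - 1) * (d / 2)).
have kappa_gt0 : 0 < kappa.
  apply: mulr_gt0 => //; apply: mulr_gt0; first by rewrite subr_gt0 expR_gt1.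
  exact: divr_gt0.
suff : kappa <= 0 by rewrite leNgt kappa_gt0.
apply: (ler_cvg_to (cvg_cst kappa) (cvg_excess_term0 s a)).
near=> t; apply: ler_pM.
- exact: ltW.
- by apply: mulr_ge0; rewrite ?subr_ge0 ?expR_ge1 ?divr_ge0 // ltW.
- by near: t.
apply: ler_pM.
- by rewrite subr_ge0 expR_ge1 // ltW.
- by rewrite divr_ge0 // ltW.
- by rewrite lerD2r ler_expR; near: t.
by near: t.
Unshelve. all: by end_near.
Qed.

Lemma Vinf_optimal s : Vinf s = V pistar s.
Proof.
apply/le_anti/andP; split; last exact: Vf_le_super Vinf pistar_opt.1 backup_Vinf_le s.
apply: (ler_cvg_to (cvg_Vf_pit s) (cvg_cst _)).
by near=> t; exact: pistar_opt.2 _ (pit_policy t) s.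
Unshelve. all: by end_near.
Qed.

Lemma cvg_Vf_pit_optimal s : V (pit t) s @[t --> \oo] --> V pistar s.
Proof. by rewrite -Vinf_optimal; exact: cvg_Vf_pit. Qed.

Lemma cvg_Vrho_pit (rho : S -> R) :
  Vrho P r gamma rho (pit t) @[t --> \oo] --> Vrho P r gamma rho pistar.
Proof. by apply: cvg_sum => s _; apply: cvgMr; exact: cvg_Vf_pit_optimal. Qed.

Lemma cvg_pit_suboptimal s b : Q pistar s b < V pistar s -> pit t s b @[t --> \oo] --> 0.
Proof.
rewrite -subr_gt0 => gap_gt0.
apply: (squeeze_cvgr (f := fun=> 0)
  (h := fun t => (V pistar s - V (pit t) s) / (V pistar s - Q pistar s b))).
- near=> t; have [pit_ge0 _] := pit_policy t.
  rewrite pit_ge0 /= ler_pdivlMr //.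
  exact: (suboptimality_gap pistar_opt s b (pit_policy t)).
- exact: cvg_cst.
- rewrite -(mul0r (V pistar s - Q pistar s b)^-1) -(subrr (V pistar s)).
  by apply: cvgMl; apply: cvgB; [exact: cvg_cst | exact: cvg_Vf_pit_optimal].
Unshelve. all: by end_near.
Qed.

Hypothesis pistar_unique : forall pol, optimal_policy P r gamma pol -> pol = pistar.

Lemma cvg_pit s a : pit t s a @[t --> \oo] --> pistar s a.
Proof.
have [a1 pistar_a1] := policy_exists_gt0 pistar_opt.1 s.
have pistarE :=
  optimal_deterministic pistar_opt pistar_unique s a1 (optimal_support pistar_opt s a1 pistar_a1).
have cvg_other b : b != a1 -> pit t s b @[t --> \oo] --> pistar s b.
  move=> b_a1; rewrite pistarE (negbTE b_a1); apply: cvg_pit_suboptimal.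
  rewrite lt_neqAle optimal_Q_le_V // andbT; apply/eqP => Q_eq.
  move: (optimal_deterministic pistar_opt pistar_unique s b Q_eq a1).
  by rewrite pistarE eqxx eq_sym (negbTE b_a1) => /eqP; rewrite oner_eq0.
have [->|a_a1] := eqVneq a a1; last exact: cvg_other.
apply: (cvg_coord_sum1 (fun t => pit t s) (pistar s) a1 _ _ cvg_other).
- by move=> t; case: (pit_policy t).
- by case: pistar_opt.1.
Qed.

End DGIteration.

End MDP.

Lemma softmax_policy {R : realType} {S A : finType} (theta : S -> A -> R) {pol : S -> A -> R} :
  is_policy pol -> is_policy (softmax theta) /\ full_support (softmax theta).
Proof.
move=> pol_policy; have den_gt0 s : 0 < \sum_(a : A) expR (theta s a).
  have [a0 _] := policy_exists_gt0 pol_policy s.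
  by apply: lt_le_trans (ler_sum_term _ a0 _) => [|a]; rewrite ?expR_gt0 ?expR_ge0.
split; last by move=> s a; rewrite /softmax divr_gt0 ?expR_gt0.
split=> [s a|s]; first by rewrite /softmax divr_ge0 ?expR_ge0 ?ltW.
by rewrite /softmax -mulr_suml divff // gt_eqF.
Qed.

Theorem theorem8 (R : realType) (S A : finType)
    (P : S -> A -> S -> R) (r : S -> A -> R) (gamma : R) (rho : S -> R)
    (pistar : S -> A -> R) (eta : R) :
  (forall s a s', 0 <= P s a s') ->
  (forall s a, \sum_(s' : S) P s a s' = 1) ->
  (forall s a, 0 <= r s a <= 1) ->
  0 <= gamma < 1 ->
  (forall s, 0 <= rho s) -> \sum_(s : S) rho s = 1 ->
  (* pistar is an optimal policy, and the unique one *)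
  optimal_policy P r gamma pistar ->
  (forall pi, optimal_policy P r gamma pi -> pi = pistar) ->
  (* full reachability *)
  (exists dmin : R, 0 < dmin /\
     forall pi, is_policy pi -> full_support pi ->
       forall s, dmin <= occ P gamma rho pi s) ->
  0 < eta ->
  forall theta0 : S -> A -> R,
  exists alpha0 : R, 0 < alpha0 /\
    forall alpha : R, 0 < alpha -> alpha <= alpha0 ->
      let pi_t := dg_iter P r gamma eta alpha (softmax theta0) in
      ((fun t => Vrho P r gamma rho (pi_t t)) @ \oo --> Vrho P r gamma rho pistar) /\
      (forall s a, (fun t => pi_t t s a) @ \oo --> pistar s a).
Proof.
(* Convergence holds statewise and for every step size. *)
move=> P_ge0 P_sum1 r_bounds gamma_bounds _ _ pistar_opt pistar_unique _ eta_gt0 theta0.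
have [pi0_policy pi0_full] := softmax_policy theta0 pistar_opt.1.
exists 1; split=> [|alpha alpha_gt0 _ /=]; first exact: ltr01.
split; first exact: cvg_Vrho_pit.
by move=> s a; apply: cvg_pit.
Qed.
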